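(* Let $0<a,b<1$, $r>as$, $s>br$, and consider the autonomous system $(x_{n+1},y_{n+1})=T_{\alpha,\beta}(x_n,y_n)$ with constant $\alpha,\beta\in[0,1)$. (a) If $p_\alpha+q_\beta<4$ and $2-p_\alpha-q_\beta+\frac{p_\alpha q_\beta(1-ab)}{2}>0$, then the positive equilibrium $K=(p,q)$ is locally asymptotically stable. (b) If $\alpha\in(\alpha_*,1)$ and $\beta\in(\beta_*,1)$, where $$\alpha_*=\max\{1-2/p,\,0\},\qquad \beta_*=\max\Big\{1-\frac{2}{q(1-ab)}-\frac{4ab}{q(1-ab)[(1-\alpha)(1-ab)p-2]},\,0\Big\}\in[0,1),$$ then both inequalities in (a) hold, so $K$ is locally asymptotically stable.
   Context: $p=\frac{r-as}{1-ab}$, $q=\frac{s-br}{1-ab}$, $K=(p,q)$. $T_{\alpha,\beta}(x,y)=\big(x[(1-\alpha)e^{r-x-ay}+\alpha],\,y[(1-\beta)e^{s-bx-y}+\beta]\big)$. $p_\alpha=(1-\alpha)p$, $q_\beta=(1-\beta)q$. *)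

From Stdlib Require Import Reals Lra.
Open Scope R_scope.

Definition pE (a b r s : R) : R := (r - a * s) / (1 - a * b).
Definition qE (a b r s : R) : R := (s - b * r) / (1 - a * b).

Definition T (a b r s alpha beta : R) (z : R * R) : R * R :=
  let (x, y) := z in
  (x * ((1 - alpha) * exp (r - x - a * y) + alpha),
   y * ((1 - beta) * exp (s - b * x - y) + beta)).

Definition dist2 (z w : R * R) : R :=
  sqrt ((fst z - fst w) ^ 2 + (snd z - snd w) ^ 2).

Fixpoint iter (n : nat) (f : R * R -> R * R) (z : R * R) : R * R :=
  match n with O => z | S m => f (iter m f z) end.

Definition loc_asym_stable (f : R * R -> R * R) (K : R * R) : Prop :=
  f K = K /\
  (forall eps, 0 < eps -> exists delta, 0 < delta /\
     forall z, dist2 z K < delta -> forall n, dist2 (iter n f z) K < eps) /\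
  (exists delta, 0 < delta /\
     forall z, dist2 z K < delta ->
       forall eps, 0 < eps -> exists N, forall n, (N <= n)%nat ->
         dist2 (iter n f z) K < eps).

From Stdlib Require Import Reals Lra Psatz.
Open Scope R_scope.

(* In the displacement [u = z - K], [T] is its Jacobian [J = [[1 - P, -a P], [-b Q, 1 - Q]]]
   (with [P = p_alpha], [Q = q_beta]) plus an error of order [|u|^2], obtained by expanding
   the exponential to second order.  The diagonal form [V u = b Q u1^2 + a P u2^2] is a
   Lyapunov function for [J]: [V u - V (J u)] is a quadratic form that the two conditions of
   (a) make positive definite.  Hence [V] contracts by a fixed factor [< 1] along [T] near [K],
   which gives both stability and geometric attraction. *)

Definition sqdist2 (z w : R * R) : R := (fst z - fst w) ^ 2 + (snd z - snd w) ^ 2.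

Lemma sqdist2_ge0 z w : 0 <= sqdist2 z w.
Proof.
  unfold sqdist2.
  pose proof (pow2_ge_0 (fst z - fst w)); pose proof (pow2_ge_0 (snd z - snd w)); lra.
Qed.

Lemma dist2_lt_sqrt z w m : dist2 z w < sqrt m <-> sqdist2 z w < m.
Proof.
  split; [apply sqrt_lt_0_alt |].
  intros H; apply sqrt_lt_1_alt; split; [apply sqdist2_ge0 | exact H].
Qed.

Section LyapunovCriterion.

Variables (f : R * R -> R * R) (K : R * R) (V : R * R -> R) (clo chi d th : R).
Hypotheses (fK : f K = K) (clo_gt0 : 0 < clo) (d_gt0 : 0 < d) (th_ge0 : 0 <= th) (th_lt1 : th < 1).
Hypothesis V_sandwich : forall z, clo * sqdist2 z K <= V z <= chi * sqdist2 z K.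
Hypothesis V_contract : forall z, sqdist2 z K < d -> V (f z) <= th * V z.

Let V_ge0 z : 0 <= V z.
Proof. pose proof (V_sandwich z); pose proof (sqdist2_ge0 z K); nra. Qed.

Let chi_gt0 : 0 < chi.
Proof.
  destruct (V_sandwich (fst K + 1, snd K)) as [Hlo Hhi].
  unfold sqdist2 in *; simpl in *.
  replace ((fst K + 1 - fst K) ^ 2 + (snd K - snd K) ^ 2) with 1 in * by ring.
  lra.
Qed.

Lemma lyapunov_iter_bound m z : 0 < m <= d -> sqdist2 z K < m * clo / chi ->
  forall n, V (iter n f z) <= th ^ n * V z /\ V (iter n f z) <= V z /\ sqdist2 (iter n f z) K < m.
Proof.
  intros [m_gt0 m_le_d] Hz.
  assert (Vz_lt : V z < m * clo).
  { destruct (V_sandwich z) as [_ Hhi].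
    apply (Rmult_lt_compat_l chi) in Hz; [| exact chi_gt0].
    replace (chi * (m * clo / chi)) with (m * clo) in Hz by (field; lra).
    lra. }
  assert (sqdist2_of_V : forall w, V w <= V z -> sqdist2 w K < m).
  { intros w Hw. destruct (V_sandwich w) as [Hlo _]. nra. }
  induction n as [| n [IHth [IHV IHd]]]; simpl.
  - split; [lra | split; [lra | apply sqdist2_of_V; lra]].
  - assert (Hstep := V_contract _ (Rlt_le_trans _ _ _ IHd m_le_d)).
    pose proof (V_ge0 (iter n f z)).
    assert (Hnext : V (f (iter n f z)) <= V z) by nra.
    split; [nra | split; [exact Hnext | apply sqdist2_of_V, Hnext]].
Qed.

Lemma loc_asym_stable_of_lyapunov : loc_asym_stable f K.
Proof.
  assert (radius_gt0 : forall m, 0 < m -> 0 < sqrt (m * clo / chi)).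
  { intros m Hm. apply sqrt_lt_R0, Rdiv_lt_0_compat; [nra | exact chi_gt0]. }
  split; [exact fK | split].
  - intros eps eps_gt0.
    set (m := Rmin d (eps ^ 2)).
    assert (m_gt0 : 0 < m) by (apply Rmin_glb_lt; nra).
    exists (sqrt (m * clo / chi)); split; [exact (radius_gt0 m m_gt0) |].
    intros z Hz n. apply dist2_lt_sqrt in Hz.
    rewrite <- (sqrt_pow2 eps) by lra. apply dist2_lt_sqrt.
    destruct (lyapunov_iter_bound m z (conj m_gt0 (Rmin_l _ _)) Hz n) as [_ [_ Hn]].
    assert (m <= eps ^ 2) by apply Rmin_r. lra.
  - exists (sqrt (d * clo / chi)); split; [exact (radius_gt0 d d_gt0) |].
    intros z Hz eps eps_gt0. apply dist2_lt_sqrt in Hz.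
    pose proof (V_ge0 z).
    assert (target_gt0 : 0 < eps ^ 2 * clo / (V z + 1)).
    { apply Rdiv_lt_0_compat; [apply Rmult_lt_0_compat; [apply pow_lt |] |]; lra. }
    destruct (pow_lt_1_zero th ltac:(rewrite Rabs_pos_eq; lra) _ target_gt0) as [N HN].
    exists N. intros n Hn.
    rewrite <- (sqrt_pow2 eps) by lra. apply dist2_lt_sqrt.
    specialize (HN n ltac:(lia)). rewrite Rabs_pos_eq in HN by (apply pow_le; lra).
    apply (Rmult_lt_compat_r (V z + 1)) in HN; [| lra].
    unfold Rdiv in HN. rewrite Rmult_assoc, Rinv_l, Rmult_1_r in HN by lra.
    destruct (lyapunov_iter_bound d z (conj d_gt0 (Rle_refl _)) Hz n) as [HV _].
    destruct (V_sandwich (iter n f z)) as [Hlo _].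
    assert (0 <= th ^ n) by (apply pow_le; lra).
    nra.
Qed.

End LyapunovCriterion.

Lemma exp_sub1_sub_bound t : t <= 1 / 2 -> 0 <= exp t - 1 - t <= 2 * t ^ 2.
Proof.
  intros Ht. pose proof (exp_ineq1_le t). pose proof (exp_ineq1_le (- t)).
  split; [lra |].
  assert (exp t * exp (- t) = 1) by (rewrite <- exp_plus, Rplus_opp_r; apply exp_0).
  pose proof (exp_pos t).
  assert (exp t * (1 - t) <= 1) by nra.
  assert (0 <= t ^ 2 * (1 - 2 * t)) by (pose proof (pow2_ge_0 t); nra).
  nra.
Qed.

Lemma sqr_exp_sub1_bound t : - (1 / 2) <= t <= 1 / 2 -> (exp t - 1) ^ 2 <= 4 * t ^ 2.
Proof.
  intros Ht. pose proof (exp_sub1_sub_bound t ltac:(lra)).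
  destruct (Rle_or_lt 0 t).
  - assert (0 <= exp t - 1 <= 2 * t) by nra. nra.
  - assert (2 * t <= exp t - 1 <= 0) by nra. nra.
Qed.

Lemma growth_factor_remainder al c p w v :
  0 <= al <= 1 -> 0 <= c <= 1 -> w ^ 2 + v ^ 2 <= 1 / 8 ->
  ((p + w) * ((1 - al) * exp (- (w + c * v)) + al) - p
     - ((1 - (1 - al) * p) * w - c * ((1 - al) * p) * v)) ^ 2
  <= (16 + 32 * p ^ 2) * (w ^ 2 + v ^ 2) ^ 2.
Proof.
  intros Hal Hc Hr.
  set (t := - (w + c * v)). set (r2 := w ^ 2 + v ^ 2) in *.
  replace ((p + w) * ((1 - al) * exp t + al) - p - ((1 - (1 - al) * p) * w - c * ((1 - al) * p) * v))
    with ((1 - al) * (w * (exp t - 1) + p * (exp t - 1 - t))) by (unfold t; ring).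
  assert (Ht2 : t ^ 2 <= 2 * r2).
  { unfold t, r2. pose proof (pow2_ge_0 (c * w - v)).
    assert (c ^ 2 <= 1) by nra. nra. }
  assert (Hw : w ^ 2 <= r2) by (unfold r2; pose proof (pow2_ge_0 v); lra).
  assert (Hr0 : 0 <= r2) by (unfold r2; pose proof (pow2_ge_0 v); pose proof (pow2_ge_0 w); lra).
  clearbody t r2.
  assert (Ht : - (1 / 2) <= t <= 1 / 2).
  { pose proof (pow2_ge_0 (t - 1 / 2)); pose proof (pow2_ge_0 (t + 1 / 2)). split; nra. }
  pose proof (sqr_exp_sub1_bound t Ht) as He.
  pose proof (exp_sub1_sub_bound t ltac:(lra)) as Hq.
  set (q := exp t - 1 - t) in *. set (e := exp t - 1) in *. clearbody e q.
  assert (Hq2 : q ^ 2 <= 4 * (2 * r2) ^ 2).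
  { assert (q ^ 2 <= (2 * t ^ 2) ^ 2) by (apply pow_incr; lra).
    assert ((t ^ 2) ^ 2 <= (2 * r2) ^ 2) by (apply pow_incr; pose proof (pow2_ge_0 t); lra).
    nra. }
  assert (((1 - al) * (w * e + p * q)) ^ 2 <= (w * e + p * q) ^ 2).
  { pose proof (pow2_ge_0 (w * e + p * q)). assert ((1 - al) ^ 2 <= 1) by nra. nra. }
  assert ((w * e + p * q) ^ 2 <= 2 * (w ^ 2 * e ^ 2) + 2 * (p ^ 2 * q ^ 2))
    by (pose proof (pow2_ge_0 (w * e - p * q)); nra).
  assert (w ^ 2 * e ^ 2 <= r2 * (4 * (2 * r2))) by (apply Rmult_le_compat; nra).
  assert (p ^ 2 * q ^ 2 <= p ^ 2 * (4 * (2 * r2) ^ 2)) by (apply Rmult_le_compat_l; nra).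
  nra.
Qed.

Definition wsumsq (w1 w2 x y : R) : R := w1 * x ^ 2 + w2 * y ^ 2.

Lemma sqr_add_le x y ep : 0 < ep -> (x + y) ^ 2 <= (1 + ep) * x ^ 2 + (1 + / ep) * y ^ 2.
Proof.
  intros ep_gt0.
  assert (0 <= (ep * x - y) ^ 2 / ep)
    by (apply Rmult_le_pos; [apply pow2_ge_0 | left; apply Rinv_0_lt_compat, ep_gt0]).
  assert ((1 + ep) * x ^ 2 + (1 + / ep) * y ^ 2 - (x + y) ^ 2 = (ep * x - y) ^ 2 / ep)
    by (field; lra).
  lra.
Qed.

Lemma wsumsq_add_le w1 w2 x1 x2 y1 y2 ep : 0 <= w1 -> 0 <= w2 -> 0 < ep ->
  wsumsq w1 w2 (x1 + y1) (x2 + y2)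
  <= (1 + ep) * wsumsq w1 w2 x1 x2 + (1 + / ep) * wsumsq w1 w2 y1 y2.
Proof.
  intros w1_ge0 w2_ge0 ep_gt0. unfold wsumsq.
  pose proof (sqr_add_le x1 y1 ep ep_gt0). pose proof (sqr_add_le x2 y2 ep ep_gt0).
  nra.
Qed.

(* [kap / (2 chi)] is the weight of the Peter-Paul inequality [wsumsq_add_le]. *)
Lemma contraction_of_linear_gap VU VL VN V' rho kap chi C :
  0 < kap <= chi -> 0 < C -> 0 <= rho -> VU <= chi * rho ->
  VL <= VU - kap * rho -> VN <= C * rho ^ 2 ->
  V' <= (1 + kap / (2 * chi)) * VL + (1 + / (kap / (2 * chi))) * VN ->
  rho <= kap / (4 * (1 + / (kap / (2 * chi))) * C) ->
  V' <= (1 - kap / (4 * chi)) * VU.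
Proof.
  intros [kap_gt0 kap_le] C_gt0 rho_ge0 HVU HVL HVN HV' Hrho.
  set (ep := kap / (2 * chi)) in *.
  assert (ep_gt0 : 0 < ep) by (apply Rdiv_lt_0_compat; lra).
  assert (M_gt0 : 0 < 1 + / ep) by (pose proof (Rinv_0_lt_compat ep ep_gt0); lra).
  assert (linear_part : (1 + ep) * VL <= VU - kap / 2 * rho).
  { assert (ep * chi = kap / 2) by (unfold ep; field; lra).
    assert (0 <= ep * kap * rho) by (apply Rmult_le_pos; nra).
    nra. }
  assert (perturbation : (1 + / ep) * VN <= kap / 4 * rho).
  { assert ((1 + / ep) * C * rho <= kap / 4).
    { apply (Rmult_le_compat_l ((1 + / ep) * C)) in Hrho; [| nra].
      replace ((1 + / ep) * C * (kap / (4 * (1 + / ep) * C))) with (kap / 4) in Hrho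
        by (field; lra).
      lra. }
    nra. }
  assert (kap / (4 * chi) * VU <= kap / 4 * rho).
  { replace (kap / (4 * chi) * VU) with (kap / 4 * (VU / chi)) by (field; lra).
    apply Rmult_le_compat_l; [lra |].
    apply (Rmult_le_reg_l chi); [lra |].
    replace (chi * (VU / chi)) with VU by (field; lra). lra. }
  lra.
Qed.

Lemma loc_asym_stable_of_linearization (f : R * R -> R * R) (K : R * R)
    (j11 j12 j21 j22 w1 w2 kap C d0 : R) :
  f K = K -> 0 < w1 -> 0 < w2 -> 0 < kap -> 0 < C -> 0 < d0 ->
  (forall u1 u2, wsumsq w1 w2 (j11 * u1 + j12 * u2) (j21 * u1 + j22 * u2)
                 <= wsumsq w1 w2 u1 u2 - kap * (u1 ^ 2 + u2 ^ 2)) ->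
  (forall u1 u2, u1 ^ 2 + u2 ^ 2 <= d0 ->
     let z' := f (fst K + u1, snd K + u2) in
     wsumsq w1 w2 (fst z' - fst K - (j11 * u1 + j12 * u2))
                  (snd z' - snd K - (j21 * u1 + j22 * u2))
     <= C * (u1 ^ 2 + u2 ^ 2) ^ 2) ->
  loc_asym_stable f K.
Proof.
  intros fK w1_gt0 w2_gt0 kap_gt0 C_gt0 d0_gt0 gap remainder.
  set (chi := w1 + w2).
  assert (kap_le : kap <= chi).
  { specialize (gap 1 0). unfold wsumsq in gap.
    pose proof (pow2_ge_0 (j11 * 1 + j12 * 0)); pose proof (pow2_ge_0 (j21 * 1 + j22 * 0)).
    unfold chi. nra. }
  set (ep := kap / (2 * chi)).
  assert (ep_gt0 : 0 < ep) by (apply Rdiv_lt_0_compat; unfold chi; lra).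
  assert (M_gt0 : 0 < 1 + / ep) by (pose proof (Rinv_0_lt_compat ep ep_gt0); lra).
  set (d := Rmin d0 (kap / (4 * (1 + / ep) * C))).
  assert (d_gt0 : 0 < d).
  { apply Rmin_glb_lt; [lra |]. apply Rdiv_lt_0_compat; [lra |]. nra. }
  apply (loc_asym_stable_of_lyapunov f K
           (fun z => wsumsq w1 w2 (fst z - fst K) (snd z - snd K))
           (Rmin w1 w2) chi d (1 - kap / (4 * chi))); try assumption.
  - apply Rmin_glb_lt; assumption.
  - enough (kap / (4 * chi) <= 1) by lra.
    apply (Rmult_le_reg_l (4 * chi)); [unfold chi; lra |].
    replace (4 * chi * (kap / (4 * chi))) with kap by (field; unfold chi; lra). lra.
  - assert (0 < kap / (4 * chi)) by (apply Rdiv_lt_0_compat; unfold chi; lra). lra.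
  - intros z. unfold sqdist2, wsumsq, chi.
    pose proof (Rmin_l w1 w2); pose proof (Rmin_r w1 w2).
    pose proof (pow2_ge_0 (fst z - fst K)); pose proof (pow2_ge_0 (snd z - snd K)).
    split; nra.
  - intros z Hz.
    set (u1 := fst z - fst K) in *. set (u2 := snd z - snd K) in *.
    set (rho := u1 ^ 2 + u2 ^ 2) in *.
    assert (Ez : (fst K + u1, snd K + u2) = z)
      by (destruct z; unfold u1, u2; simpl; f_equal; ring).
    assert (d <= d0) by apply Rmin_l.
    assert (d <= kap / (4 * (1 + / ep) * C)) by apply Rmin_r.
    assert (rho_lt_d : rho < d) by exact Hz.
    assert (rho_le_d0 : rho <= d0) by lra.
    pose proof (remainder u1 u2 rho_le_d0) as HN; cbv zeta in HN; rewrite Ez in HN.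
    cbv beta.
    set (L1 := j11 * u1 + j12 * u2) in *. set (L2 := j21 * u1 + j22 * u2) in *.
    set (e1 := fst (f z) - fst K - L1) in *. set (e2 := snd (f z) - snd K - L2) in *.
    apply (contraction_of_linear_gap (wsumsq w1 w2 u1 u2) (wsumsq w1 w2 L1 L2)
             (wsumsq w1 w2 e1 e2) _ rho kap chi C (conj kap_gt0 kap_le) C_gt0).
    + unfold rho; pose proof (pow2_ge_0 u1); pose proof (pow2_ge_0 u2); lra.
    + unfold wsumsq, rho, chi. pose proof (pow2_ge_0 u1); pose proof (pow2_ge_0 u2). nra.
    + apply gap.
    + exact HN.
    + fold ep.
      replace (fst (f z) - fst K) with (L1 + e1) by (unfold e1; ring).
      replace (snd (f z) - snd K) with (L2 + e2) by (unfold e2; ring).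
      apply wsumsq_add_le; lra.
    + fold ep. lra.
Qed.

Lemma stability_conditions_coef_pos k P Q : 0 < k < 1 -> 0 < P -> 0 < Q -> P + Q < 4 ->
  2 - P - Q + P * Q * (1 - k) / 2 > 0 -> 2 - P - k * Q > 0.
Proof.
  intros Hk HP HQ HS HG.
  destruct (Rle_or_lt ((1 - k) * Q / 2 - 1) 0) as [Hc | Hc].
  - destruct (Rle_or_lt (2 - P - k * Q) 0) as [H | H]; [exfalso | lra].
    assert (2 - P - Q + P * Q * (1 - k) / 2
            = - (1 - k) * k * Q ^ 2 / 2 + (P - (2 - k * Q)) * ((1 - k) * Q / 2 - 1)) by field.
    assert (0 <= (P - (2 - k * Q)) * (- ((1 - k) * Q / 2 - 1))) by (apply Rmult_le_pos; lra).
    assert (0 < (1 - k) * k * Q ^ 2) by (apply Rmult_lt_0_compat; nra).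
    nra.
  - exfalso.
    assert (2 - P - Q + P * Q * (1 - k) / 2
            = - 2 + (1 - k) * (4 - Q) * Q / 2 + (P - (4 - Q)) * ((1 - k) * Q / 2 - 1)) by field.
    assert (0 < ((4 - Q) - P) * ((1 - k) * Q / 2 - 1)) by (apply Rmult_lt_0_compat; lra).
    assert ((4 - Q) * Q <= 4) by (pose proof (pow2_ge_0 (Q - 2)); nra).
    nra.
Qed.

Lemma quadratic_form_lower_bound A B C x y : 0 < A -> 0 < C -> 0 < A * C - B ^ 2 ->
  (A * C - B ^ 2) / (A + C) * (x ^ 2 + y ^ 2) <= A * x ^ 2 + 2 * B * x * y + C * y ^ 2.
Proof.
  intros HA HC HD. set (m := (A * C - B ^ 2) / (A + C)).
  assert (Hm1 : A - m = (A ^ 2 + B ^ 2) / (A + C)) by (unfold m; field; lra).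
  assert (Hm2 : (A - m) * (C - m) - B ^ 2 = m ^ 2) by (unfold m; field; lra).
  assert (HAm : 0 < A - m) by (rewrite Hm1; apply Rdiv_lt_0_compat; nra).
  assert (0 <= (A - m) * ((A - m) * x ^ 2 + 2 * B * x * y + (C - m) * y ^ 2)).
  { replace ((A - m) * ((A - m) * x ^ 2 + 2 * B * x * y + (C - m) * y ^ 2))
      with (((A - m) * x + B * y) ^ 2 + ((A - m) * (C - m) - B ^ 2) * y ^ 2) by ring.
    rewrite Hm2. pose proof (pow2_ge_0 ((A - m) * x + B * y)). pose proof (pow2_ge_0 (m * y)). nra. }
  assert (0 <= (A - m) * x ^ 2 + 2 * B * x * y + (C - m) * y ^ 2)
    by (apply (Rmult_le_reg_l (A - m)); lra).
  nra.
Qed.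

(* With the weights [b Q] and [a P] the loss [V u - V (J u)] is the quadratic form
   [P Q (A u1^2 + 2 B u1 u2 + C u2^2)] below, whose discriminant [A C - B^2] equals
   [2 a b (1 - a b)] times the second stability condition. *)
Lemma T_jacobian_gap a b P Q : 0 < a < 1 -> 0 < b < 1 -> 0 < P -> 0 < Q -> P + Q < 4 ->
  2 - P - Q + P * Q * (1 - a * b) / 2 > 0 ->
  exists kap, 0 < kap /\ forall u1 u2,
    wsumsq (b * Q) (a * P) ((1 - P) * u1 + - (a * P) * u2) (- (b * Q) * u1 + (1 - Q) * u2)
    <= wsumsq (b * Q) (a * P) u1 u2 - kap * (u1 ^ 2 + u2 ^ 2).
Proof.
  intros Ha Hb HP HQ HS HG.
  set (k := a * b) in *.
  assert (Hk : 0 < k < 1) by (unfold k; split; nra).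
  set (A := b * (2 - P - k * Q)). set (C := a * (2 - Q - k * P)). set (B := k * (2 - P - Q)).
  assert (HA : 0 < A) by (pose proof (stability_conditions_coef_pos k P Q Hk HP HQ HS HG); unfold A; nra).
  assert (HC : 0 < C).
  { assert (2 - Q - P + Q * P * (1 - k) / 2 > 0) by lra.
    pose proof (stability_conditions_coef_pos k Q P Hk HQ HP ltac:(lra) H). unfold C; nra. }
  assert (HD : 0 < A * C - B ^ 2).
  { replace (A * C - B ^ 2) with (a * b * (2 * (1 - k) * (2 - P - Q + P * Q * (1 - k) / 2)))
      by (unfold A, C, B, k; field).
    apply Rmult_lt_0_compat; [nra |]. apply Rmult_lt_0_compat; lra. }
  exists (P * Q * ((A * C - B ^ 2) / (A + C))). split.
  - apply Rmult_lt_0_compat; [nra |]. apply Rdiv_lt_0_compat; lra.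
  - intros u1 u2. pose proof (quadratic_form_lower_bound A B C u1 u2 HA HC HD).
    assert (wsumsq (b * Q) (a * P) u1 u2
            - wsumsq (b * Q) (a * P) ((1 - P) * u1 + - (a * P) * u2) (- (b * Q) * u1 + (1 - Q) * u2)
            = P * Q * (A * u1 ^ 2 + 2 * B * u1 * u2 + C * u2 ^ 2))
      by (unfold wsumsq, A, B, C, k; ring).
    assert (0 < P * Q) by nra.
    nra.
Qed.

Lemma T_fixed a b r s al be p q : r = p + a * q -> s = b * p + q ->
  T a b r s al be (p, q) = (p, q).
Proof.
  intros Hr Hs. unfold T.
  replace (r - p - a * q) with 0 by lra. replace (s - b * p - q) with 0 by lra.
  rewrite exp_0. f_equal; ring.
Qed.

Lemma T_remainder a b r s al be p q u1 u2 :
  0 < a < 1 -> 0 < b < 1 -> 0 <= al < 1 -> 0 <= be < 1 -> r = p + a * q -> s = b * p + q ->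
  u1 ^ 2 + u2 ^ 2 <= 1 / 8 ->
  let z' := T a b r s al be (p + u1, q + u2) in
  (fst z' - p - ((1 - (1 - al) * p) * u1 + - (a * ((1 - al) * p)) * u2)) ^ 2
    <= (16 + 32 * p ^ 2) * (u1 ^ 2 + u2 ^ 2) ^ 2 /\
  (snd z' - q - (- (b * ((1 - be) * q)) * u1 + (1 - (1 - be) * q) * u2)) ^ 2
    <= (16 + 32 * q ^ 2) * (u1 ^ 2 + u2 ^ 2) ^ 2.
Proof.
  intros Ha Hb Hal Hbe Hr Hs Hu z'. unfold z', T; cbn [fst snd].
  replace (r - (p + u1) - a * (q + u2)) with (- (u1 + a * u2)) by lra.
  replace (s - b * (p + u1) - (q + u2)) with (- (u2 + b * u1)) by lra.
  split.
  - pose proof (growth_factor_remainder al a p u1 u2 ltac:(lra) ltac:(lra) Hu) as H.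
    replace ((1 - (1 - al) * p) * u1 + - (a * ((1 - al) * p)) * u2)
      with ((1 - (1 - al) * p) * u1 - a * ((1 - al) * p) * u2) by ring.
    exact H.
  - replace (u1 ^ 2 + u2 ^ 2) with (u2 ^ 2 + u1 ^ 2) by ring.
    pose proof (growth_factor_remainder be b q u2 u1 ltac:(lra) ltac:(lra) ltac:(lra)) as H.
    replace (- (b * ((1 - be) * q)) * u1 + (1 - (1 - be) * q) * u2)
      with ((1 - (1 - be) * q) * u2 - b * ((1 - be) * q) * u1) by ring.
    exact H.
Qed.

Lemma T_loc_asym_stable a b r s al be p q :
  0 < a < 1 -> 0 < b < 1 -> 0 <= al < 1 -> 0 <= be < 1 -> 0 < p -> 0 < q ->
  r = p + a * q -> s = b * p + q ->
  let P := (1 - al) * p in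
  let Q := (1 - be) * q in
  P + Q < 4 -> 2 - P - Q + P * Q * (1 - a * b) / 2 > 0 ->
  loc_asym_stable (T a b r s al be) (p, q).
Proof.
  intros Ha Hb Hal Hbe Hp Hq Hr Hs P Q HS HG.
  assert (HP : 0 < P) by (unfold P; nra). assert (HQ : 0 < Q) by (unfold Q; nra).
  destruct (T_jacobian_gap a b P Q Ha Hb HP HQ HS HG) as [kap [kap_gt0 gap]].
  apply (loc_asym_stable_of_linearization _ _ (1 - P) (- (a * P)) (- (b * Q)) (1 - Q)
           (b * Q) (a * P) kap (b * Q * (16 + 32 * p ^ 2) + a * P * (16 + 32 * q ^ 2)) (1 / 8));
    [exact (T_fixed a b r s al be p q Hr Hs) | nra | nra | exact kap_gt0 | | lra | exact gap |].
  - assert (0 < b * Q) by nra. assert (0 < a * P) by nra.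
    pose proof (pow2_ge_0 p); pose proof (pow2_ge_0 q).
    apply Rplus_lt_0_compat; apply Rmult_lt_0_compat; lra.
  - intros u1 u2 Hu z'.
    destruct (T_remainder a b r s al be p q u1 u2 Ha Hb Hal Hbe Hr Hs Hu) as [H1 H2].
    unfold z', wsumsq; cbn [fst snd]. fold P Q in H1, H2.
    replace ((b * Q * (16 + 32 * p ^ 2) + a * P * (16 + 32 * q ^ 2)) * (u1 ^ 2 + u2 ^ 2) ^ 2)
      with (b * Q * ((16 + 32 * p ^ 2) * (u1 ^ 2 + u2 ^ 2) ^ 2)
            + a * P * ((16 + 32 * q ^ 2) * (u1 ^ 2 + u2 ^ 2) ^ 2)) by ring.
    apply Rplus_le_compat; apply Rmult_le_compat_l; nra.
Qed.

Lemma stability_conditions_of_thresholds a b p q al be :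
  0 < a < 1 -> 0 < b < 1 -> 0 < p -> 0 < q -> 0 <= al < 1 -> 0 <= be < 1 ->
  Rmax (1 - 2 / p) 0 < al ->
  Rmax (1 - 2 / (q * (1 - a * b))
        - 4 * a * b / (q * (1 - a * b) * ((1 - al) * (1 - a * b) * p - 2))) 0 < be ->
  let P := (1 - al) * p in
  let Q := (1 - be) * q in
  P + Q < 4 /\ 2 - P - Q + P * Q * (1 - a * b) / 2 > 0.
Proof.
  intros Ha Hb Hp Hq Hal Hbe Hal_s Hbe_s P Q.
  set (c := 1 - a * b) in *.
  assert (Hc : 0 < c < 1) by (unfold c; split; nra).
  assert (HP0 : 0 <= P) by (unfold P; nra). assert (HQ0 : 0 <= Q) by (unfold Q; nra).
  assert (HP2 : P < 2).
  { assert (1 - al < 2 / p) by (pose proof (Rmax_l (1 - 2 / p) 0); lra).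
    apply (Rmult_lt_compat_r p) in H; [| lra].
    replace (2 / p * p) with 2 in H by (field; lra). unfold P; lra. }
  set (D := (1 - al) * c * p - 2) in *.
  assert (HD : D = P * c - 2) by (unfold D, P; ring).
  assert (HDneg : D < 0) by nra.
  assert (Hbe' : 1 - be < 2 / (q * c) + 4 * a * b / (q * c * D)).
  { pose proof (Rmax_l (1 - 2 / (q * c) - 4 * a * b / (q * c * D)) 0). lra. }
  assert (threshold : 2 * D + 4 * (1 - c) < Q * c * D).
  { assert (Hn : 0 < - (q * c * D)).
    { assert (0 < q * c) by nra. rewrite Ropp_mult_distr_r. apply Rmult_lt_0_compat; lra. }
    apply (Rmult_lt_compat_l (- (q * c * D))) in Hbe'; [| exact Hn].
    replace (- (q * c * D) * (2 / (q * c) + 4 * a * b / (q * c * D))) with (- (2 * D + 4 * a * b))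
      in Hbe' by (field; repeat split; nra).
    replace (4 * (1 - c)) with (4 * a * b) by (unfold c; ring).
    unfold Q. nra. }
  rewrite HD in threshold.
  assert (key : Q * (2 - P * c) < 2 * (2 - P)).
  { assert (c * (Q * (2 - P * c)) < c * (2 * (2 - P))) by nra.
    apply (Rmult_lt_reg_l c); lra. }
  split.
  - assert (Q < 2) by (apply (Rmult_lt_reg_r (2 - P * c)); nra). lra.
  - nra.
Qed.

Theorem mainTheorem5 (a b r s alpha beta : R) :
  0 < a < 1 -> 0 < b < 1 -> r > a * s -> s > b * r ->
  0 <= alpha < 1 -> 0 <= beta < 1 ->
  let p := pE a b r s in
  let q := qE a b r s in
  let palpha := (1 - alpha) * p in
  let qbeta := (1 - beta) * q in
  (* (a) *)
  ((palpha + qbeta < 4 ->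
    2 - palpha - qbeta + palpha * qbeta * (1 - a * b) / 2 > 0 ->
    loc_asym_stable (T a b r s alpha beta) (p, q))
  /\
  (* (b) *)
  (let alpha_s := Rmax (1 - 2 / p) 0 in
   let beta_s := Rmax (1 - 2 / (q * (1 - a * b))
                        - 4 * a * b / (q * (1 - a * b) * ((1 - alpha) * (1 - a * b) * p - 2))) 0 in
   alpha_s < alpha < 1 -> beta_s < beta < 1 ->
   (0 <= beta_s < 1) /\
   palpha + qbeta < 4 /\
   2 - palpha - qbeta + palpha * qbeta * (1 - a * b) / 2 > 0 /\
   loc_asym_stable (T a b r s alpha beta) (p, q))).
Proof.
  intros Ha Hb Hrs Hsr Hal Hbe p q palpha qbeta.
  assert (Hc : 0 < 1 - a * b) by nra.
  assert (Hp : 0 < p) by (apply Rdiv_lt_0_compat; lra).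
  assert (Hq : 0 < q) by (apply Rdiv_lt_0_compat; lra).
  assert (Hr : r = p + a * q) by (unfold p, q, pE, qE; field; lra).
  assert (Hs : s = b * p + q) by (unfold p, q, pE, qE; field; lra).
  pose proof (T_loc_asym_stable a b r s alpha beta p q Ha Hb Hal Hbe Hp Hq Hr Hs) as part_a.
  split; [exact part_a |].
  intros alpha_s beta_s [Hal_s _] [Hbe_s Hbe1].
  destruct (stability_conditions_of_thresholds a b p q alpha beta Ha Hb Hp Hq Hal Hbe Hal_s Hbe_s)
    as [HS HG].
  split; [split; [apply Rmax_r | lra] |].
  auto.
Qed.
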